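(* Let $n\ge 2$ and let $k_1,\dots,k_n$, $a_1,\dots,a_{n-1}$, $b_1,\dots,b_n$ be real or complex numbers. Let $A_1$ be the $n\times n$ matrix with entries $$(A_1)_{ij}=\begin{cases} k_i b_j, & i\le j,\\ k_j a_j, & i>j.\end{cases}$$ Then $$\det(A_1)=k_1b_n\,(k_2b_1-k_1a_1)(k_3b_2-k_2a_2)\cdots(k_nb_{n-1}-k_{n-1}a_{n-1}).$$ In particular, $A_1$ is singular if $k_1=0$, or $b_n=0$, or $k_{i+1}b_i-k_ia_i=0$ for some $i\in\{1,\dots,n-1\}$. *)

From mathcomp Require Import all_boot all_order all_algebra.
Set Implicit Arguments. Unset Strict Implicit. Unset Printing Implicit Defensive.
Import GRing.Theory.
Local Open Scope ring_scope.

(* Indices are 0-based: k_i, b_i (i = 0..n-1), a_i (i = 0..n-2) correspond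
   to the paper's k_{i+1}, b_{i+1}, a_{i+1}. *)
Definition A1 (R : ringType) (n : nat) (k a b : nat -> R) : 'M[R]_n :=
  \matrix_(i < n, j < n) if (i <= j)%N then k i * b j else k j * a j.

From mathcomp Require Import all_boot all_order all_algebra.
Set Implicit Arguments. Unset Strict Implicit. Unset Printing Implicit Defensive.
Import GRing.Theory.
Local Open Scope ring_scope.

(* Let K be the column (k_i)_i.  Column j < n - 1 of A1 agrees with b_j K on
   and above the diagonal, and the last column is b_(n-1) K.  Hence A1 = C V,
   where column j < n - 1 of C is column j of A1 minus b_j K (so it vanishes
   on and above the diagonal), the last column of C is K, and V is the
   identity with its last row replaced by b, so that det V = b_(n-1).  The
   first row of C is (0, ..., 0, k_0); expanding along it leaves a lower
   triangular minor with diagonal entries k_i a_i - b_i k_(i+1), and the two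
   signs (-1)^(n-1) cancel. *)

Lemma expand_det_row_single (R : comPzRingType) n (A : 'M[R]_n) i0 j0 :
  (forall j, j != j0 -> A i0 j = 0) -> \det A = A i0 j0 * cofactor A i0 j0.
Proof.
move=> A_i0; rewrite (expand_det_row _ i0) (bigD1 j0) //= big1 ?addr0 //.
by move=> j /A_i0 ->; rewrite mul0r.
Qed.

Section LastRowIdentity.
Variables (R : comPzRingType) (m : nat) (d : 'I_m.+1 -> R).

Definition id_mx_lastrow : 'M[R]_m.+1 :=
  \matrix_(i, j) if i == ord_max then d j else (i == j)%:R.

Lemma det_id_mx_lastrow : \det id_mx_lastrow = d ord_max.
Proof.
have trig : is_trig_mx id_mx_lastrow.
  apply/is_trig_mxP => i j lt_ij.
  rewrite mxE (ltn_eqF lt_ij : (i == j) = false) ifN //.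
  by apply: contraTneq lt_ij => ->; rewrite -leqNgt -ltnS.
rewrite det_trig // big_ord_recr /= big1 ?mul1r; first by rewrite mxE eqxx.
by move=> i _; rewrite mxE -val_eqE /= (ltn_eqF (ltn_ord i)) eqxx.
Qed.

Lemma mul_mx_id_lastrow (A : 'M[R]_m.+1) i j :
  (A *m id_mx_lastrow) i j =
  (if j == ord_max then 0 else A i j) + A i ord_max * d j.
Proof.
rewrite mxE (bigD1 ord_max) //= mxE eqxx addrC; congr (_ + _).
case: eqP => [-> | /eqP ne_j_max].
  by rewrite big1 // => l ne_l_max; rewrite mxE (negbTE ne_l_max) mulr0.
rewrite (bigD1 j) //= big1 ?mxE ?(negbTE ne_j_max) ?eqxx ?mulr1 ?addr0 //.
move=> l /andP[ne_l_max ne_lj].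
by rewrite mxE (negbTE ne_l_max) (negbTE ne_lj) mulr0.
Qed.

End LastRowIdentity.

Section DetA1.
Variables (R : comNzRingType) (k a b : nat -> R).

Definition A1_cleared m : 'M[R]_m.+1 := \matrix_(i, j)
  if j == ord_max then k i else if (i <= j)%N then 0 else k j * a j - b j * k i.

Lemma A1_factor m :
  A1 m.+1 k a b = A1_cleared m *m id_mx_lastrow (fun j => b j).
Proof.
apply/matrixP => i j; rewrite mul_mx_id_lastrow !mxE eqxx.
case: eqP => [-> | _]; first by rewrite -ltnS ltn_ord add0r.
by case: leqP; rewrite ?add0r // [b j * _]mulrC subrK.
Qed.

Lemma det_A1_cleared m :
  \det (A1_cleared m) = k 0 * \prod_(i < m) (k i.+1 * b i - k i * a i).
Proof.
rewrite (expand_det_row_single (i0 := ord0) (j0 := ord_max)); last first.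
  by move=> j /negbTE ne_j_max; rewrite mxE ne_j_max.
rewrite mxE eqxx /cofactor add0n det_trig; last first.
  apply/is_trig_mxP => i j lt_ij.
  by rewrite !mxE lift_eqF lift0 lift_max lt_ij.
under eq_bigr => i _ do rewrite !mxE lift_eqF lift0 lift_max ltnn.
rewrite -[X in (-1) ^+ X](card_ord m) -prodrN; congr (_ * _).
by apply: eq_bigr => i _; rewrite opprB [b i * _]mulrC.
Qed.

Lemma det_A1 m :
  \det (A1 m.+1 k a b) = k 0 * b m * \prod_(i < m) (k i.+1 * b i - k i * a i).
Proof.
by rewrite A1_factor det_mulmx det_A1_cleared det_id_mx_lastrow mulrAC.
Qed.

End DetA1.

Theorem mainTheorem2 (R : fieldType) (n : nat) (k a b : nat -> R) :
  (2 <= n)%N ->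
  \det (A1 n k a b) =
    k 0%N * b n.-1 * \prod_(i < n.-1) (k i.+1 * b i - k i * a i)
  /\ ((k 0%N = 0 \/ b n.-1 = 0 \/
       exists i : nat, (i < n.-1)%N /\ k i.+1 * b i - k i * a i = 0) ->
      \det (A1 n k a b) = 0).
Proof.
case: n => [|m] // _; rewrite det_A1; split => // singular.
apply/eqP; rewrite !mulf_eq0.
case: singular => [-> | [-> | [i [lt_im factor0]]]]; rewrite ?eqxx ?orbT //.
by apply/orP; right; apply/prodf_eq0; exists (Ordinal lt_im); rewrite ?factor0.
Qed.
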